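(* Let $F\subseteq E(BH_2)$ with $|F|\le 3$ and $\delta(BH_2-F)\ge 2$. Then every edge of $BH_2-F$ lies on a Hamiltonian cycle of $BH_2-F$.
   Context: The balanced hypercube $BH_2$ has vertex set $\{0,1,2,3\}^2$, vertices written $(a_0,a_1)$; the vertex $(a_0,a_1)$ is adjacent exactly to the four vertices $((a_0\pm1)\bmod 4,a_1)$ and $((a_0\pm1)\bmod 4,(a_1+(-1)^{a_0})\bmod 4)$. $BH_2-F$ is the graph on $V(BH_2)$ with edge set $E(BH_2)\setminus F$. *)

From mathcomp Require Import all_boot.
Set Implicit Arguments. Unset Strict Implicit. Unset Printing Implicit Defensive.

Notation V := ('I_4 * 'I_4)%type.

(* (a0,a1) ~ (b0,b1) iff b0 = a0 +- 1 (mod 4) and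
   (b1 = a1  or  b1 = a1 + (-1)^a0 (mod 4)).  (-1 mod 4 = +3.) *)
Definition bh2 : rel V := fun u v =>
  let a0 := nat_of_ord u.1 in let a1 := nat_of_ord u.2 in
  let b0 := nat_of_ord v.1 in let b1 := nat_of_ord v.2 in
  ((b0 == (a0 + 1) %% 4) || (b0 == (a0 + 3) %% 4)) &&
  ((b1 == a1) || (b1 == (a1 + (if odd a0 then 3 else 1)) %% 4)).

Definition is_edge (e : {set V}) : bool :=
  [exists u, exists v, bh2 u v && (e == [set u; v])].

Definition adjF (F : {set {set V}}) : rel V :=
  fun u v => bh2 u v && ([set u; v] \notin F).

Definition min_deg_ge (r : rel V) (k : nat) : Prop :=
  forall v : V, k <= #|[set w | r v w]|.

Definition ham_cycle (r : rel V) (s : seq V) : Prop :=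
  [/\ uniq s, size s = #|{: V}| & cycle r s].

From mathcomp Require Import all_boot.
Set Implicit Arguments. Unset Strict Implicit. Unset Printing Implicit Defensive.

(* BH_2 has 16 vertices and 32 edges, so the theorem is a finite check.  A set
   of at most three faulty edges is described by at most three edge indices.
   For each of the 5489 such index sets, either some vertex keeps fewer than
   two neighbours, or every surviving edge lies on one of the 137 Hamiltonian
   cycles of BH_2 listed below that uses none of the faulty edges; this is
   verified by [vm_compute].  Rotating, and if necessary reversing, that cycle
   makes it start with the given edge. *)

(* [enum 'I_4] does not evaluate under [vm_compute] (the proof in [insub] is
   opaque), so the vertices are listed explicitly. *)
Definition ords4 : seq 'I_4 :=
  [:: @Ordinal 4 0 isT; @Ordinal 4 1 isT; @Ordinal 4 2 isT; @Ordinal 4 3 isT].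

Definition vertices : seq V := [seq (i, j) | i <- ords4, j <- ords4].

Lemma mem_vertices x : x \in vertices.
Proof.
case: x => [[a a4] [b b4]]; apply: allpairs_f.
  by do 4?[case: a a4 => [|a] a4].
by do 4?[case: b b4 => [|b] b4].
Qed.

Lemma all_vertices (P : pred V) : all P vertices -> forall x, P x.
Proof. by move=> /allP PV x; apply: PV; apply: mem_vertices. Qed.

Lemma all_vertices2 (R : rel V) :
  all (fun x => all (R x) vertices) vertices -> forall x y, R x y.
Proof. by move=> /all_vertices RV x; apply/all_vertices. Qed.

Lemma card_vertices (P : pred V) : #|[set x | P x]| = count P vertices.
Proof.
have Uv : uniq vertices by [].
rewrite -size_filter -(card_uniqP (filter_uniq P Uv)).
by apply: eq_card => x; rewrite inE mem_filter mem_vertices andbT.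
Qed.

Lemma bh2_sym : symmetric bh2.
Proof.
move=> x y; apply/eqP.
by apply: (all_vertices2 (R := fun x y => bh2 x y == bh2 y x)).
Qed.

Lemma bh2_parity x y : bh2 x y -> odd x.1 = ~~ odd y.1.
Proof.
move=> xy; apply/eqP; move: xy; apply/implyP.
by apply: (all_vertices2 (R := fun x y => bh2 x y ==> (odd x.1 == ~~ odd y.1))).
Qed.

Lemma bh2_irrefl x : bh2 x x = false.
Proof. by apply/negbTE/negP => /bh2_parity; case: odd. Qed.

Lemma adjF_sym F : symmetric (adjF F).
Proof. by move=> x y; rewrite /adjF bh2_sym setUC. Qed.

Definition edges : seq (V * V) :=
  [seq e <- [seq (x, y) | x <- vertices, y <- vertices] | ~~ odd (e.1 : V).1 && bh2 e.1 e.2].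

Lemma size_edges : size edges = 32. Proof. by []. Qed.

Lemma uniq_edges : uniq edges. Proof. by []. Qed.

Lemma mem_edges x y : ((x, y) \in edges) = ~~ odd x.1 && bh2 x y.
Proof. by rewrite mem_filter allpairs_f ?mem_vertices ?andbT. Qed.

Lemma bh2_edge_orient x y : bh2 x y -> ((x, y) \in edges) || ((y, x) \in edges).
Proof. by move=> xy; rewrite !mem_edges xy bh2_sym xy (bh2_parity xy); case: odd. Qed.

Definition edge_set (e : V * V) : {set V} := [set e.1; e.2].

Lemma edge_set_inj : {in edges &, injective edge_set}.
Proof.
move=> [a b] [c d]; rewrite !mem_edges /edge_set /= => /andP[ea ab] /andP[ec _] E.
have : a \in [set c; d] by rewrite -E set21.
have : b \in [set c; d] by rewrite -E set22.
rewrite !inE => /orP[]/eqP bcd /orP[]/eqP acd; subst; rewrite ?bh2_irrefl // in ab.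
by move: ea; rewrite (bh2_parity ab) negbK (negbTE ec).
Qed.

Definition edge (i : nat) : V * V := nth ((ord0, ord0), (ord0, ord0)) edges i.

Lemma mem_edge i : i < 32 -> edge i \in edges.
Proof. by move=> i32; rewrite mem_nth ?size_edges. Qed.

Lemma edge_of_bh2 x y :
  bh2 x y -> exists2 i, i < 32 & (edge i == (x, y)) || (edge i == (y, x)).
Proof.
move=> /bh2_edge_orient /orP[] e_in;
  [exists (index (x, y) edges) | exists (index (y, x) edges)];
  by rewrite -?size_edges ?index_mem // /edge nth_index ?eqxx ?orbT.
Qed.

Lemma mem_ham_cycle (r : rel V) c x : ham_cycle r c -> x \in c.
Proof.
case=> Uc Sc _; have /subset_cardP cT : #|c| = #|{: V}| by rewrite (card_uniqP Uc).
by rewrite (cT (subset_predT _)).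
Qed.

Lemma eq_ham_cycle (r r' : rel V) c : r =2 r' -> ham_cycle r c -> ham_cycle r' c.
Proof. by move=> rr' [Uc Sc Cc]; split; rewrite // -(eq_cycle rr'). Qed.

Lemma ham_cycle_rot (r : rel V) c i : ham_cycle r c -> ham_cycle r (rot i c).
Proof. by case=> Uc Sc Cc; split; rewrite ?rot_uniq ?size_rot ?rot_cycle. Qed.

Lemma ham_cycle_rev (r : rel V) c : symmetric r -> ham_cycle r c -> ham_cycle r (rev c).
Proof.
move=> sym_r [Uc Sc Cc]; split; rewrite ?rev_uniq ?size_rev // rev_cycle.
by rewrite (eq_cycle (e' := r)) // => x y; rewrite sym_r.
Qed.

Lemma ham_cycle_next (r : rel V) c u :
  ham_cycle r c -> exists t, ham_cycle r (u :: next c u :: t).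
Proof.
move=> Hc; have [i p def_c] := rot_to (mem_ham_cycle u Hc).
have Hp : ham_cycle r (u :: p) by rewrite -def_c; apply: ham_cycle_rot.
case: p Hp def_c => [|y t] Hp def_c; first by case: Hp => _; rewrite card_prod !card_ord.
by case: Hc => Uc _ _; exists t; rewrite -(next_rot i Uc) def_c /= eqxx.
Qed.

Lemma ham_cycle_through (r : rel V) c u v : symmetric r -> ham_cycle r c ->
  (next c u == v) || (next c v == u) -> exists t, ham_cycle r (u :: v :: t).
Proof.
move=> sym_r Hc /orP[]/eqP uv; first by rewrite -uv; apply: ham_cycle_next.
have Hrc := ham_cycle_rev sym_r Hc.
suff <- : next (rev c) u = v by apply: ham_cycle_next.
by case: Hc => Uc _ _; rewrite next_rev // -uv prev_next.
Qed.

Fixpoint small_subseqs (T : Type) (k : nat) (s : seq T) : seq (seq T) :=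
  match k, s with
  | k'.+1, x :: s' => [seq x :: t | t <- small_subseqs k' s'] ++ small_subseqs k s'
  | _, _ => [:: [::]]
  end.

Lemma mem_small_subseqs (T : eqType) k (s t : seq T) :
  subseq t s -> size t <= k -> t \in small_subseqs k s.
Proof.
elim: s k t => [|x s IHs] [|k] t; rewrite ?subseq0 ?leqn0 ?size_eq0.
- by move=> /eqP->.
- by move=> /eqP->.
- by move=> _ /eqP->.
case: t => [|y t] /=; first by rewrite mem_cat IHs ?sub0seq ?orbT.
rewrite mem_cat; case: eqP => [-> st tk | _ yst ytk].
  by rewrite (map_f _ (IHs _ _ st tk)).
by rewrite IHs ?orbT.
Qed.

Definition removed (f : seq (V * V)) (x y : V) := ((x, y) \in f) || ((y, x) \in f).

Definition bh2_minus (f : seq (V * V)) : rel V := fun x y => bh2 x y && ~~ removed f x y.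

Definition min_deg2 (r : rel V) := all (fun x => 1 < count (r x) vertices) vertices.

Lemma min_deg2P (r : rel V) : reflect (min_deg_ge r 2) (min_deg2 r).
Proof.
apply: (iffP allP) => md x; first by rewrite card_vertices; apply: md; apply: mem_vertices.
by rewrite -card_vertices.
Qed.

Lemma eq_min_deg2 (r r' : rel V) : r =2 r' -> min_deg2 r = min_deg2 r'.
Proof. by move=> rr'; apply: eq_all => x; rewrite (eq_count (rr' x)). Qed.

Definition fault_indices (F : {set {set V}}) : seq nat :=
  [seq i <- iota 0 32 | edge_set (edge i) \in F].

Lemma removed_fault_indices F x y : bh2 x y ->
  removed (map edge (fault_indices F)) x y = ([set x; y] \in F).
Proof.
move=> xy; rewrite /removed; apply/idP/idP.
  case/orP=> /mapP[i]; rewrite mem_filter /edge_set => /andP[iF _] Ei; rewrite -Ei // in iF.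
  by rewrite setUC.
move=> xyF; have [i i32 Ei] := edge_of_bh2 xy.
have i_f : edge i \in map edge (fault_indices F).
  rewrite map_f // mem_filter mem_iota leq0n add0n i32 !andbT /edge_set.
  by case/orP: Ei => /eqP ->; rewrite // setUC.
by case/orP: Ei => /eqP <-; rewrite i_f ?orbT.
Qed.

Lemma adjF_fault_indices F : adjF F =2 bh2_minus (map edge (fault_indices F)).
Proof.
move=> x y; rewrite /adjF /bh2_minus; case xy: (bh2 x y) => //=.
by rewrite removed_fault_indices.
Qed.

Lemma size_fault_indices F : size (fault_indices F) <= #|F|.
Proof.
set f := fault_indices F.
have f32 i : i \in f -> i < 32 by rewrite mem_filter mem_iota => /andP[_ /andP[_]].
rewrite cardE -(size_map (edge_set \o edge)); apply: uniq_leq_size.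
  rewrite map_inj_in_uniq ?filter_uniq ?iota_uniq // => i j i_f j_f /edge_set_inj Eij.
  have /eqP := Eij (mem_edge (f32 _ i_f)) (mem_edge (f32 _ j_f)).
  by rewrite /edge nth_uniq ?size_edges ?f32 ?uniq_edges // => /eqP.
by move=> _ /mapP[i i_f ->]; rewrite mem_enum; move: i_f; rewrite mem_filter => /andP[].
Qed.

Definition vertex_of_code (n : nat) : V := (nth ord0 ords4 (n %/ 4), nth ord0 ords4 (n %% 4)).

(* Hamiltonian cycles of BH_2 found by a computer search; the vertex (a0, a1)
   is written as its code 4 * a0 + a1. *)
Definition ham_cycle_codes : seq (seq nat) :=
  [:: [:: 0; 4; 3; 7; 2; 6; 1; 5; 8; 12; 11; 15; 10; 14; 9; 13];
     [:: 0; 5; 9; 6; 10; 7; 11; 4; 8; 13; 1; 14; 2; 15; 3; 12];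
     [:: 0; 4; 3; 7; 2; 14; 1; 13; 8; 5; 9; 6; 10; 15; 11; 12];
     [:: 0; 5; 1; 6; 2; 15; 3; 12; 8; 4; 11; 7; 10; 14; 9; 13];
     [:: 0; 4; 3; 12; 8; 5; 1; 14; 2; 15; 11; 7; 10; 6; 9; 13];
     [:: 0; 5; 9; 14; 10; 15; 3; 7; 2; 6; 1; 13; 8; 4; 11; 12];
     [:: 0; 4; 11; 7; 2; 6; 9; 5; 8; 12; 3; 15; 10; 14; 1; 13];
     [:: 0; 5; 1; 6; 10; 7; 3; 4; 8; 13; 9; 14; 2; 15; 11; 12];
     [:: 0; 4; 11; 7; 2; 14; 9; 13; 8; 5; 1; 6; 10; 15; 3; 12];
     [:: 0; 5; 9; 6; 2; 15; 11; 12; 8; 4; 3; 7; 10; 14; 1; 13];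
     [:: 0; 4; 11; 12; 8; 5; 9; 14; 2; 15; 3; 7; 10; 6; 1; 13];
     [:: 0; 5; 1; 14; 10; 15; 11; 7; 2; 6; 9; 13; 8; 4; 3; 12];
     [:: 0; 4; 3; 7; 11; 15; 2; 6; 10; 14; 9; 5; 1; 13; 8; 12];
     [:: 0; 5; 8; 4; 11; 12; 3; 15; 10; 7; 2; 14; 1; 6; 9; 13];
     [:: 0; 4; 3; 12; 11; 7; 10; 15; 2; 6; 1; 14; 9; 5; 8; 13];
     [:: 0; 4; 8; 12; 11; 15; 3; 7; 2; 14; 10; 6; 9; 13; 1; 5];
     [:: 0; 12; 8; 4; 11; 7; 3; 15; 10; 6; 2; 14; 1; 5; 9; 13];
     [:: 0; 5; 8; 13; 1; 6; 9; 14; 10; 7; 2; 15; 11; 4; 3; 12];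
     [:: 0; 4; 8; 5; 9; 13; 1; 6; 2; 14; 10; 7; 11; 15; 3; 12];
     [:: 0; 5; 1; 14; 9; 6; 10; 15; 2; 7; 3; 4; 11; 12; 8; 13];
     [:: 0; 12; 11; 7; 2; 14; 9; 6; 10; 15; 3; 4; 8; 5; 1; 13];
     [:: 0; 4; 11; 15; 10; 6; 1; 14; 2; 7; 3; 12; 8; 13; 9; 5];
     [:: 0; 4; 3; 15; 2; 14; 10; 7; 11; 12; 8; 13; 9; 6; 1; 5];
     [:: 0; 12; 3; 7; 10; 6; 2; 15; 11; 4; 8; 5; 1; 14; 9; 13];
     [:: 0; 12; 11; 4; 3; 15; 2; 7; 10; 14; 1; 6; 9; 5; 8; 13];
     [:: 0; 4; 11; 12; 3; 7; 10; 15; 2; 6; 9; 14; 1; 13; 8; 5];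
     [:: 0; 4; 8; 12; 3; 7; 11; 15; 10; 14; 2; 6; 9; 5; 1; 13];
     [:: 0; 5; 9; 13; 1; 14; 10; 6; 2; 7; 11; 15; 3; 4; 8; 12];
     [:: 0; 5; 1; 6; 9; 14; 2; 7; 10; 15; 11; 4; 3; 12; 8; 13];
     [:: 0; 4; 8; 13; 9; 5; 1; 14; 10; 6; 2; 15; 3; 7; 11; 12];
     [:: 0; 5; 8; 4; 3; 12; 11; 7; 2; 15; 10; 6; 1; 14; 9; 13];
     [:: 0; 4; 11; 15; 3; 7; 10; 14; 2; 6; 9; 13; 1; 5; 8; 12];
     [:: 0; 4; 3; 15; 10; 7; 11; 12; 8; 13; 1; 6; 2; 14; 9; 5];
     [:: 0; 12; 3; 7; 2; 15; 11; 4; 8; 5; 9; 14; 10; 6; 1; 13];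
     [:: 0; 4; 8; 12; 3; 7; 11; 15; 10; 6; 2; 14; 9; 13; 1; 5];
     [:: 0; 12; 8; 4; 3; 15; 11; 7; 2; 14; 10; 6; 1; 5; 9; 13];
     [:: 0; 5; 8; 13; 9; 6; 1; 14; 2; 15; 10; 7; 3; 4; 11; 12];
     [:: 0; 4; 11; 12; 3; 15; 2; 7; 10; 6; 9; 14; 1; 5; 8; 13];
     [:: 0; 5; 9; 14; 1; 6; 2; 7; 10; 15; 11; 12; 3; 4; 8; 13];
     [:: 0; 5; 8; 12; 3; 4; 11; 7; 2; 15; 10; 14; 9; 6; 1; 13];
     [:: 0; 4; 11; 15; 3; 12; 8; 13; 9; 6; 2; 7; 10; 14; 1; 5];
     [:: 0; 12; 11; 7; 3; 4; 8; 5; 1; 14; 10; 15; 2; 6; 9; 13];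
     [:: 0; 4; 8; 13; 1; 5; 9; 14; 2; 6; 10; 7; 3; 15; 11; 12];
     [:: 0; 4; 11; 7; 3; 15; 2; 14; 10; 6; 1; 13; 9; 5; 8; 12];
     [:: 0; 12; 3; 7; 10; 15; 11; 4; 8; 5; 9; 14; 2; 6; 1; 13];
     [:: 0; 4; 3; 15; 2; 7; 11; 12; 8; 13; 1; 6; 10; 14; 9; 5];
     [:: 0; 5; 1; 6; 9; 14; 10; 15; 2; 7; 3; 12; 11; 4; 8; 13];
     [:: 0; 5; 8; 12; 11; 4; 3; 15; 10; 7; 2; 6; 1; 14; 9; 13];
     [:: 0; 4; 3; 15; 2; 14; 1; 13; 9; 6; 10; 7; 11; 12; 8; 5];
     [:: 0; 12; 3; 7; 10; 6; 9; 5; 1; 14; 2; 15; 11; 4; 8; 13];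
     [:: 0; 4; 11; 15; 2; 6; 1; 14; 10; 7; 3; 12; 8; 5; 9; 13];
     [:: 0; 5; 1; 13; 8; 4; 3; 15; 2; 6; 9; 14; 10; 7; 11; 12];
     [:: 0; 4; 8; 13; 1; 14; 2; 7; 11; 12; 3; 15; 10; 6; 9; 5];
     [:: 0; 4; 8; 5; 1; 13; 9; 14; 10; 6; 2; 7; 11; 15; 3; 12];
     [:: 0; 5; 9; 13; 1; 6; 2; 14; 10; 15; 11; 7; 3; 4; 8; 12];
     [:: 0; 12; 3; 4; 11; 7; 10; 15; 2; 6; 9; 14; 1; 5; 8; 13];
     [:: 0; 12; 8; 5; 9; 6; 10; 15; 11; 4; 3; 7; 2; 14; 1; 13];
     [:: 0; 4; 8; 5; 1; 6; 10; 7; 3; 12; 11; 15; 2; 14; 9; 13];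
     [:: 0; 4; 3; 15; 11; 7; 10; 6; 2; 14; 1; 5; 9; 13; 8; 12];
     [:: 0; 12; 11; 15; 2; 14; 10; 7; 3; 4; 8; 5; 9; 6; 1; 13];
     [:: 0; 4; 11; 7; 2; 6; 1; 5; 9; 14; 10; 15; 3; 12; 8; 13];
     [:: 0; 5; 8; 4; 11; 15; 10; 14; 1; 13; 9; 6; 2; 7; 3; 12];
     [:: 0; 4; 3; 12; 11; 15; 2; 7; 10; 6; 1; 14; 9; 13; 8; 5];
     [:: 0; 4; 11; 7; 3; 12; 8; 13; 1; 6; 10; 15; 2; 14; 9; 5];
     [:: 0; 4; 3; 15; 10; 6; 2; 7; 11; 12; 8; 5; 9; 14; 1; 13];
     [:: 0; 5; 1; 6; 2; 15; 3; 4; 11; 7; 10; 14; 9; 13; 8; 12];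
     [:: 0; 12; 3; 15; 11; 4; 8; 5; 9; 6; 10; 7; 2; 14; 1; 13];
     [:: 0; 4; 11; 7; 2; 15; 3; 12; 8; 5; 1; 14; 10; 6; 9; 13];
     [:: 0; 4; 8; 13; 9; 5; 1; 6; 2; 14; 10; 15; 11; 7; 3; 12];
     [:: 0; 4; 8; 12; 11; 7; 3; 15; 2; 14; 10; 6; 9; 5; 1; 13];
     [:: 0; 4; 11; 15; 10; 14; 2; 7; 3; 12; 8; 13; 1; 6; 9; 5];
     [:: 0; 5; 1; 14; 2; 6; 9; 13; 8; 4; 3; 7; 10; 15; 11; 12];
     [:: 0; 12; 8; 4; 11; 15; 3; 7; 2; 6; 10; 14; 9; 5; 1; 13];
     [:: 0; 5; 8; 4; 3; 7; 10; 14; 9; 13; 1; 6; 2; 15; 11; 12];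
     [:: 0; 5; 9; 6; 1; 14; 2; 15; 10; 7; 11; 4; 3; 12; 8; 13];
     [:: 0; 4; 8; 5; 9; 14; 10; 7; 11; 12; 3; 15; 2; 6; 1; 13];
     [:: 0; 4; 11; 7; 10; 6; 2; 15; 3; 12; 8; 13; 1; 14; 9; 5];
     [:: 0; 5; 9; 14; 2; 7; 10; 6; 1; 13; 8; 4; 3; 15; 11; 12];
     [:: 0; 4; 3; 15; 10; 14; 1; 5; 8; 13; 9; 6; 2; 7; 11; 12];
     [:: 0; 4; 3; 7; 11; 12; 8; 5; 9; 6; 10; 15; 2; 14; 1; 13];
     [:: 0; 5; 1; 14; 10; 6; 9; 13; 8; 4; 3; 7; 2; 15; 11; 12];
     [:: 0; 5; 9; 14; 2; 15; 11; 7; 10; 6; 1; 13; 8; 4; 3; 12];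
     [:: 0; 4; 11; 12; 8; 13; 9; 6; 10; 15; 3; 7; 2; 14; 1; 5];
     [:: 0; 4; 3; 15; 11; 12; 8; 5; 1; 6; 2; 7; 10; 14; 9; 13];
     [:: 0; 5; 9; 14; 2; 15; 11; 4; 3; 7; 10; 6; 1; 13; 8; 12];
     [:: 0; 5; 9; 13; 8; 4; 3; 15; 10; 14; 1; 6; 2; 7; 11; 12];
     [:: 0; 4; 11; 7; 2; 14; 9; 13; 1; 6; 10; 15; 3; 12; 8; 5];
     [:: 0; 5; 9; 14; 2; 7; 3; 12; 8; 4; 11; 15; 10; 6; 1; 13];
     [:: 0; 4; 11; 15; 2; 14; 9; 6; 10; 7; 3; 12; 8; 5; 1; 13];
     [:: 0; 5; 1; 6; 2; 15; 10; 14; 9; 13; 8; 4; 11; 7; 3; 12];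
     [:: 0; 12; 3; 15; 10; 14; 2; 7; 11; 4; 8; 5; 1; 6; 9; 13];
     [:: 0; 12; 11; 15; 10; 6; 1; 5; 9; 14; 2; 7; 3; 4; 8; 13];
     [:: 0; 12; 11; 4; 8; 5; 1; 14; 10; 7; 3; 15; 2; 6; 9; 13];
     [:: 0; 4; 3; 15; 2; 6; 9; 5; 1; 14; 10; 7; 11; 12; 8; 13];
     [:: 0; 4; 8; 12; 11; 15; 3; 7; 10; 6; 2; 14; 1; 13; 9; 5];
     [:: 0; 4; 8; 13; 9; 6; 2; 7; 3; 12; 11; 15; 10; 14; 1; 5];
     [:: 0; 5; 1; 14; 9; 13; 8; 4; 3; 7; 2; 6; 10; 15; 11; 12];
     [:: 0; 4; 11; 15; 2; 6; 1; 13; 8; 5; 9; 14; 10; 7; 3; 12];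
     [:: 0; 12; 8; 5; 1; 14; 10; 15; 3; 4; 11; 7; 2; 6; 9; 13];
     [:: 0; 12; 3; 15; 2; 14; 1; 6; 10; 7; 11; 4; 8; 5; 9; 13];
     [:: 0; 5; 1; 14; 2; 7; 11; 12; 8; 4; 3; 15; 10; 6; 9; 13];
     [:: 0; 4; 11; 7; 10; 15; 3; 12; 8; 5; 1; 14; 2; 6; 9; 13];
     [:: 0; 4; 3; 12; 8; 5; 9; 14; 10; 15; 11; 7; 2; 6; 1; 13];
     [:: 0; 4; 3; 7; 2; 6; 9; 14; 10; 15; 11; 12; 8; 13; 1; 5];
     [:: 0; 5; 8; 4; 3; 12; 11; 15; 2; 7; 10; 6; 9; 14; 1; 13];
     [:: 0; 4; 3; 12; 11; 7; 2; 15; 10; 14; 1; 6; 9; 13; 8; 5];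
     [:: 0; 4; 8; 5; 1; 13; 9; 6; 2; 14; 10; 15; 3; 7; 11; 12];
     [:: 0; 4; 3; 12; 8; 13; 1; 14; 10; 7; 11; 15; 2; 6; 9; 5];
     [:: 0; 5; 8; 13; 1; 6; 9; 14; 2; 7; 10; 15; 3; 4; 11; 12];
     [:: 0; 4; 8; 13; 1; 5; 9; 6; 10; 14; 2; 15; 11; 7; 3; 12];
     [:: 0; 12; 3; 4; 8; 5; 1; 6; 10; 15; 11; 7; 2; 14; 9; 13];
     [:: 0; 12; 3; 4; 11; 7; 2; 15; 10; 6; 1; 14; 9; 5; 8; 13];
     [:: 0; 4; 3; 12; 11; 7; 10; 15; 2; 14; 9; 6; 1; 5; 8; 13];
     [:: 0; 4; 8; 12; 3; 15; 11; 7; 2; 6; 10; 14; 1; 5; 9; 13];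
     [:: 0; 4; 3; 7; 2; 14; 1; 6; 10; 15; 11; 12; 8; 5; 9; 13];
     [:: 0; 12; 3; 15; 2; 6; 9; 14; 10; 7; 11; 4; 8; 5; 1; 13];
     [:: 0; 4; 11; 15; 3; 7; 2; 14; 10; 6; 1; 5; 9; 13; 8; 12];
     [:: 0; 5; 1; 13; 9; 6; 10; 14; 2; 15; 3; 7; 11; 4; 8; 12];
     [:: 0; 5; 9; 14; 1; 6; 10; 7; 2; 15; 3; 12; 11; 4; 8; 13];
     [:: 0; 4; 3; 15; 2; 14; 1; 5; 8; 13; 9; 6; 10; 7; 11; 12];
     [:: 0; 4; 11; 12; 3; 15; 10; 7; 2; 6; 9; 14; 1; 5; 8; 13];
     [:: 0; 12; 8; 4; 3; 15; 11; 7; 10; 14; 2; 6; 9; 5; 1; 13];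
     [:: 0; 5; 9; 6; 2; 14; 1; 13; 8; 4; 3; 7; 10; 15; 11; 12];
     [:: 0; 4; 3; 7; 11; 15; 10; 6; 2; 14; 1; 13; 9; 5; 8; 12];
     [:: 0; 4; 11; 15; 2; 7; 3; 12; 8; 13; 1; 14; 10; 6; 9; 5];
     [:: 0; 4; 3; 7; 2; 15; 11; 12; 8; 5; 1; 6; 10; 14; 9; 13];
     [:: 0; 4; 3; 7; 10; 15; 11; 12; 8; 5; 1; 6; 2; 14; 9; 13];
     [:: 0; 4; 11; 12; 8; 5; 1; 6; 2; 7; 3; 15; 10; 14; 9; 13];
     [:: 0; 4; 3; 7; 10; 14; 2; 15; 11; 12; 8; 5; 1; 6; 9; 13];
     [:: 0; 4; 11; 12; 8; 5; 9; 6; 2; 7; 3; 15; 10; 14; 1; 13];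
     [:: 0; 5; 1; 6; 2; 7; 3; 4; 8; 12; 11; 15; 10; 14; 9; 13];
     [:: 0; 5; 1; 6; 9; 13; 8; 4; 3; 7; 2; 14; 10; 15; 11; 12];
     [:: 0; 5; 1; 6; 10; 7; 3; 4; 8; 12; 11; 15; 2; 14; 9; 13];
     [:: 0; 5; 8; 4; 3; 12; 11; 7; 10; 15; 2; 6; 1; 14; 9; 13];
     [:: 0; 4; 3; 7; 2; 14; 9; 6; 10; 15; 11; 12; 8; 13; 1; 5];
     [:: 0; 4; 8; 5; 9; 13; 1; 6; 2; 14; 10; 7; 3; 15; 11; 12];
     [:: 0; 4; 11; 12; 3; 7; 2; 15; 10; 6; 1; 14; 9; 5; 8; 13]].

Definition certificate_cycles : seq (seq V) := map (map vertex_of_code) ham_cycle_codes.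

Lemma certificate_cycles_ham c : c \in certificate_cycles -> ham_cycle bh2 c.
Proof.
have : all (fun c => [&& uniq c, size c == 16 & cycle bh2 c]) certificate_cycles.
  by vm_compute.
by move=> /allP H /H /and3P[Uc /eqP Sc Cc]; split; rewrite // card_prod !card_ord.
Qed.

Definition edge_on (c : seq V) (e : V * V) := (next c e.1 == e.2) || (next c e.2 == e.1).

Definition edge_mask (c : seq V) : bitseq := [seq edge_on c e | e <- edges].

Lemma nth_edge_mask c i : i < 32 -> nth false (edge_mask c) i = edge_on c (edge i).
Proof. by move=> i32; rewrite (nth_map ((ord0, ord0), (ord0, ord0))) ?size_edges. Qed.

Lemma ham_cycle_avoiding f c : ham_cycle bh2 c ->
  all (fun j => ~~ edge_on c (edge j)) f -> ham_cycle (bh2_minus (map edge f)) c.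
Proof.
move=> [Uc Sc Cc] /allP avoid; split=> //; apply: cycle_from_next => // x xc.
rewrite /bh2_minus (next_cycle Cc xc) /removed; apply/norP.
by split; apply/mapP=> -[j j_f Ej]; have := avoid j j_f; rewrite -Ej /edge_on eqxx ?orbT.
Qed.

Definition avoiding (ms : seq bitseq) (f : seq nat) :=
  [seq m <- ms | all (fun j => ~~ nth false m j) f].

Definition covered (ms : seq bitseq) (f : seq nat) :=
  let ms' := avoiding ms f in all (fun i => (i \in f) || has (nth false ^~ i) ms') (iota 0 32).

(* Written with [if] rather than [||] so that [vm_compute], which evaluates
   arguments eagerly, runs the costly degree test only when coverage fails. *)
Definition certified (ms : seq bitseq) (f : seq nat) :=
  if covered ms f then true else ~~ min_deg2 (bh2_minus (map edge f)).

Lemma certificate :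
  all (certified (map edge_mask certificate_cycles)) (small_subseqs 3 (iota 0 32)).
Proof. by vm_compute. Qed.

Lemma covered_has_mask ms f i : covered ms f -> i < 32 -> i \notin f ->
  exists2 m, m \in ms & nth false m i && all (fun j => ~~ nth false m j) f.
Proof.
move=> /allP/(_ i); rewrite mem_iota leq0n add0n => cov i32 i_f.
have := cov i32; rewrite (negbTE i_f) => /hasP[m].
by rewrite mem_filter => /andP[avoid_m m_ms] m_i; exists m; rewrite ?m_i.
Qed.

Lemma certificate_covers f i :
  subseq f (iota 0 32) -> size f <= 3 -> min_deg2 (bh2_minus (map edge f)) ->
  i < 32 -> i \notin f ->
  exists2 c, c \in certificate_cycles &
    edge_on c (edge i) && all (fun j => ~~ edge_on c (edge j)) f.
Proof.
move=> sub_f f3 mdeg i32 i_f.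
have /allP/(_ f (mem_small_subseqs sub_f f3)) := certificate.
rewrite /certified mdeg; case: ifP => // cov _.
have [_ /mapP[c cC ->] /andP[on_i avoid]] := covered_has_mask cov i32 i_f.
exists c; rewrite // -nth_edge_mask // on_i; apply/allP=> j j_f.
have := mem_subseq sub_f j_f; rewrite mem_iota => /andP[_ j32].
by rewrite -nth_edge_mask // (allP avoid).
Qed.

Theorem lemma8 (F : {set {set V}}) :
  (forall e, e \in F -> is_edge e) ->
  #|F| <= 3 ->
  min_deg_ge (adjF F) 2 ->
  forall u v : V, adjF F u v ->
  exists t : seq V, ham_cycle (adjF F) (u :: v :: t).
Proof.
move=> _ F3 mdeg u v uv.
have adjE := adjF_fault_indices F; set f := fault_indices F in adjE.
have f_sub : subseq f (iota 0 32) by apply: filter_subseq.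
have f3 : size f <= 3 := leq_trans (size_fault_indices F) F3.
have md2 : min_deg2 (bh2_minus (map edge f)) by rewrite -(eq_min_deg2 adjE); apply/min_deg2P.
have [i i32 Ei] := edge_of_bh2 (andP uv).1.
have i_f : i \notin f.
  apply: contraTN uv => i_f; rewrite adjE /bh2_minus /removed negb_and negbK.
  by case/orP: Ei => /eqP <-; rewrite map_f ?orbT.
have [c cC /andP[on_i avoid]] := certificate_covers f_sub f3 md2 i32 i_f.
have Hc : ham_cycle (adjF F) c.
  apply: (@eq_ham_cycle (bh2_minus (map edge f))); first by move=> x y; rewrite adjE.
  exact: ham_cycle_avoiding (certificate_cycles_ham cC) avoid.
apply: ham_cycle_through (adjF_sym F) Hc _.
by case/orP: Ei on_i => /eqP ->; rewrite /edge_on //= orbC.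
Qed.
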